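(* Let $\mathbb{M}^3$ be Minkowski 3-space with inner product $\langle x,y\rangle_{\mathbb{L}}=-x_1y_1+x_2y_2+x_3y_3$. Let $\sigma=\sigma(u,v)$ be a smooth surface in $\mathbb{M}^3$ and let $\{t,n,b\}$ be smooth pairwise orthogonal vector fields along $\sigma$ with $\langle t,t\rangle_{\mathbb{L}}=-1$, $\langle n,n\rangle_{\mathbb{L}}=1$, $\langle b,b\rangle_{\mathbb{L}}=1$, such that $\sigma_u=t$, $\sigma_v=\lambda b$ for a nowhere-vanishing function $\lambda$, and $$t_u=\kappa n,\qquad n_u=\kappa t-\tau b,\qquad b_u=\tau n$$ for functions $\kappa,\tau$ (so each $u$-curve is a unit-speed timelike geodesic of $\sigma$ with curvature $\kappa$ and torsion $\tau$). Assume there are constants $A,B$ with $B^2>A^2$ and $A\kappa+B\tau=1$, and that $\tau$ vanishes nowhere. Define $$\sigma^*(u,v)=\sigma(u,v)-A\,n(u,v),\qquad t^*=\frac{Bt+Ab}{\sqrt{B^2-A^2}},\qquad b^*=\frac{-At+Bb}{\sqrt{B^2-A^2}},$$ and along each $u$-curve let $u^*$ be a parameter with $du^*/du=\sqrt{B^2-A^2}\,\tau$. Then: (1) $\sigma^*_u=\tau(Bt+Ab)$, so $t^*=\partial\sigma^*/\partial u^*$ is a unit timelike vector, and $n$ is orthogonal to both $\sigma^*_u$ and $\sigma^*_v$; (2) $\|\sigma-\sigma^*\|=\sqrt{|\langle \sigma-\sigma^*,\sigma-\sigma^*\rangle_{\mathbb{L}}|}$ is constant, $\langle\sigma^*-\sigma,b\rangle_{\mathbb{L}}=0$,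 $\langle\sigma^*-\sigma,b^*\rangle_{\mathbb{L}}=0$, and $\langle b,b^*\rangle_{\mathbb{L}}$ is constant; (3) $\partial t^*/\partial u^*=\kappa^* n$ and $\partial b^*/\partial u^*=\tau^* n$, where $$\kappa^*=\frac{B\kappa+A\tau}{(B^2-A^2)\tau},\qquad \tau^*=\frac{B\tau-A\kappa}{(B^2-A^2)\tau}.$$
   Context: A vector $x\in\mathbb{M}^3$ is spacelike if $\langle x,x\rangle_{\mathbb{L}}>0$ or $x=0$, timelike if $\langle x,x\rangle_{\mathbb{L}}<0$. A surface spanned by a one-parameter family of geodesic Bertrand curves with constants $A,B$ ($A\kappa+B\tau=1$) is called a Razzaboni surface; the map $\sigma\mapsto\sigma^*$ satisfying properties (2) is called a Razzaboni transformation and $\sigma^*$ the dual Razzaboni surface. *)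

From Stdlib Require Import Reals List.
From Coquelicot Require Import Coquelicot.
Open Scope R_scope.

Definition V3 : Type := (R * R * R)%type.
Definition c1 (x : V3) : R := fst (fst x).
Definition c2 (x : V3) : R := snd (fst x).
Definition c3 (x : V3) : R := snd x.
Definition mkV (a b c : R) : V3 := (a, b, c).

Definition vadd (x y : V3) : V3 := mkV (c1 x + c1 y) (c2 x + c2 y) (c3 x + c3 y).
Definition vscal (k : R) (x : V3) : V3 := mkV (k * c1 x) (k * c2 x) (k * c3 x).
Definition vsub (x y : V3) : V3 := vadd x (vscal (-1) y).

Definition lor (x y : V3) : R := - c1 x * c1 y + c2 x * c2 y + c3 x * c3 y.
Definition lnorm (x : V3) : R := sqrt (Rabs (lor x x)).

Definition pu (f : R -> R -> R) (u v : R) : R := Derive (fun x => f x v) u.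
Definition pv (f : R -> R -> R) (u v : R) : R := Derive (fun y => f u y) v.

Definition puV (F : R -> R -> V3) (u v : R) : V3 :=
  mkV (pu (fun a b => c1 (F a b)) u v) (pu (fun a b => c2 (F a b)) u v)
      (pu (fun a b => c3 (F a b)) u v).
Definition pvV (F : R -> R -> V3) (u v : R) : V3 :=
  mkV (pv (fun a b => c1 (F a b)) u v) (pv (fun a b => c2 (F a b)) u v)
      (pv (fun a b => c3 (F a b)) u v).

(* Iterated partial derivative: true = d/du, false = d/dv
   (applied from the end of the list to the front). *)
Fixpoint pd (w : list bool) (f : R -> R -> R) : R -> R -> R :=
  match w with
  | nil => f
  | true :: w' => pu (pd w' f)
  | false :: w' => pv (pd w' f)
  end.

Definition open2 (D : R -> R -> Prop) : Prop :=
  forall u v, D u v -> exists eps : R, 0 < eps /\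
    forall x y, Rabs (x - u) < eps -> Rabs (y - v) < eps -> D x y.

Definition smooth_on (D : R -> R -> Prop) (f : R -> R -> R) : Prop :=
  forall (w : list bool) u v, D u v ->
    ex_derive (fun x => pd w f x v) u /\ ex_derive (fun y => pd w f u y) v.

Definition smoothV_on (D : R -> R -> Prop) (F : R -> R -> V3) : Prop :=
  smooth_on D (fun a b => c1 (F a b)) /\ smooth_on D (fun a b => c2 (F a b)) /\
  smooth_on D (fun a b => c3 (F a b)).

(* The offset curve σ* = σ - A n only involves the Frenet frame: by the Frenet equations and
   A κ + B τ = 1 its u-derivative is τ (B t + A b), which after the reparametrisation
   du*/du = √(B² - A²) τ is the unit timelike vector t*.  The remaining claims are linear
   algebra in the orthonormal frame {t, n, b}, except ⟨n, σ*_v⟩ = 0, which comes from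
   σ_v = λ b ⊥ n and from n_v ⊥ n, the latter because ⟨n, n⟩ is constant. *)
From Pilot Require Import Defs.
From Stdlib Require Import Reals Lra FunctionalExtensionality.
From Coquelicot Require Import Coquelicot.
Open Scope R_scope.

(* [Reals] exports a [c1] of its own. *)
Local Notation c1 := Defs.c1.

Definition vcomb (a : R) (x : V3) (c : R) (y : V3) : V3 := vadd (vscal a x) (vscal c y).

Lemma V3_eq (x y : V3) : c1 x = c1 y -> c2 x = c2 y -> c3 x = c3 y -> x = y.
Proof.
  destruct x as [[x1 x2] x3], y as [[y1 y2] y3]; unfold c1, c2, c3; simpl.
  intros; subst; reflexivity.
Qed.

Ltac V3_ring :=
  apply V3_eq; unfold vcomb, vsub, vadd, vscal, mkV, c1, c2, c3; simpl; ring.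

Lemma vsub_vcomb x a y : vsub x (vscal a y) = vcomb 1 x (- a) y.
Proof. V3_ring. Qed.

Lemma vsub_vsubr x y : vsub x (vsub x y) = y.
Proof. V3_ring. Qed.

Lemma vsub_vsubl x y : vsub (vsub x y) x = vscal (-1) y.
Proof. V3_ring. Qed.

Lemma vscal_vcomb k a x c y : vscal k (vcomb a x c y) = vcomb (k * a) x (k * c) y.
Proof. V3_ring. Qed.

Lemma vscal_vscal k m x : vscal k (vscal m x) = vscal (k * m) x.
Proof. V3_ring. Qed.

Lemma vcomb_vscal_same a p c q x : vcomb a (vscal p x) c (vscal q x) = vscal (a * p + c * q) x.
Proof. V3_ring. Qed.

Lemma lor_sym x y : lor x y = lor y x.
Proof. unfold lor; ring. Qed.

Lemma lor_scall k x y : lor (vscal k x) y = k * lor x y.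
Proof. unfold lor, vscal, mkV, c1, c2, c3; simpl; ring. Qed.

Lemma lor_scalr k x y : lor x (vscal k y) = k * lor x y.
Proof. unfold lor, vscal, mkV, c1, c2, c3; simpl; ring. Qed.

Lemma lor_vcombl a x c y z : lor (vcomb a x c y) z = a * lor x z + c * lor y z.
Proof. unfold lor, vcomb, vadd, vscal, mkV, c1, c2, c3; simpl; ring. Qed.

Lemma lor_vcombr x a y c z : lor x (vcomb a y c z) = a * lor x y + c * lor x z.
Proof. unfold lor, vcomb, vadd, vscal, mkV, c1, c2, c3; simpl; ring. Qed.

Section OrthonormalFrame.

Variables t n b : V3.
Hypotheses (Htt : lor t t = -1) (Hbb : lor b b = 1)
  (Htn : lor t n = 0) (Htb : lor t b = 0) (Hnb : lor n b = 0).

Lemma lor_frame_comb a c a' c' : lor (vcomb a t c b) (vcomb a' t c' b) = - (a * a') + c * c'.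
Proof. rewrite !lor_vcombl, !lor_vcombr, (lor_sym b t), Htt, Htb, Hbb; ring. Qed.

Lemma lor_normal_comb a c : lor n (vcomb a t c b) = 0.
Proof. rewrite lor_vcombr, (lor_sym n t), Htn, Hnb; ring. Qed.

Lemma lor_binormal_comb a c : lor b (vcomb a t c b) = c.
Proof. rewrite lor_vcombr, (lor_sym b t), Htb, Hbb; ring. Qed.

Lemma lor_boost_comb s A B : s * s = B ^ 2 - A ^ 2 -> s <> 0 ->
  lor (vcomb (/ s * B) t (/ s * A) b) (vcomb (/ s * B) t (/ s * A) b) = -1.
Proof.
  intros Hs2 Hs; rewrite lor_frame_comb.
  assert (Hss : B ^ 2 - A ^ 2 <> 0) by (rewrite <- Hs2; now apply Rmult_integral_contrapositive).
  transitivity ((A ^ 2 - B ^ 2) / (s * s)); [field; auto | rewrite Hs2; field; auto].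
Qed.

End OrthonormalFrame.

Lemma Derive_comb (f g : R -> R) a c x : ex_derive f x -> ex_derive g x ->
  Derive (fun y => a * f y + c * g y) x = a * Derive f x + c * Derive g x.
Proof. intros; rewrite Derive_plus, !Derive_scal; auto using ex_derive_scal. Qed.

Definition ex_puV (F : R -> R -> V3) (u v : R) : Prop :=
  ex_derive (fun x => c1 (F x v)) u /\ ex_derive (fun x => c2 (F x v)) u /\
  ex_derive (fun x => c3 (F x v)) u.

Definition ex_pvV (F : R -> R -> V3) (u v : R) : Prop :=
  ex_derive (fun y => c1 (F u y)) v /\ ex_derive (fun y => c2 (F u y)) v /\
  ex_derive (fun y => c3 (F u y)) v.

Lemma smoothV_ex_puV D F u v : smoothV_on D F -> D u v -> ex_puV F u v.
Proof.
  intros (H1 & H2 & H3) Hd.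
  split; [|split]; [apply (H1 nil u v Hd) | apply (H2 nil u v Hd) | apply (H3 nil u v Hd)].
Qed.

Lemma smoothV_ex_pvV D F u v : smoothV_on D F -> D u v -> ex_pvV F u v.
Proof.
  intros (H1 & H2 & H3) Hd.
  split; [|split]; [apply (H1 nil u v Hd) | apply (H2 nil u v Hd) | apply (H3 nil u v Hd)].
Qed.

Lemma pvV_comb (H F G : R -> R -> V3) a c u v :
  (forall x y, H x y = vcomb a (F x y) c (G x y)) -> ex_pvV F u v -> ex_pvV G u v ->
  pvV H u v = vcomb a (pvV F u v) c (pvV G u v).
Proof.
  intros EH (F1 & F2 & F3) (G1 & G2 & G3).
  replace H with (fun x y => vcomb a (F x y) c (G x y))
    by (do 2 (apply functional_extensionality; intro); now rewrite EH).
  apply V3_eq; unfold pvV, pv, vcomb, vadd, vscal, mkV, c1, c2, c3 in *; simpl in *;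
    now apply Derive_comb.
Qed.

(* Swapping the arguments turns a u-derivative into a v-derivative, definitionally. *)
Lemma puV_comb (H F G : R -> R -> V3) a c u v :
  (forall x y, H x y = vcomb a (F x y) c (G x y)) -> ex_puV F u v -> ex_puV G u v ->
  puV H u v = vcomb a (puV F u v) c (puV G u v).
Proof.
  intros EH; exact (pvV_comb (fun x y => H y x) (fun x y => F y x) (fun x y => G y x)
                      a c v u (fun x y => EH y x)).
Qed.

Definition is_deriveV (f : R -> V3) (y : R) (f' : V3) : Prop :=
  is_derive (fun z => c1 (f z)) y (c1 f') /\ is_derive (fun z => c2 (f z)) y (c2 f') /\
  is_derive (fun z => c3 (f z)) y (c3 f').

Lemma is_deriveV_pvV F u v : ex_pvV F u v -> is_deriveV (fun y => F u y) v (pvV F u v).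
Proof. intros (E1 & E2 & E3); split; [|split]; now apply Derive_correct. Qed.

Lemma is_derive_lor (f g : R -> V3) y f' g' : is_deriveV f y f' -> is_deriveV g y g' ->
  is_derive (fun z => lor (f z) (g z)) y (lor f' (g y) + lor (f y) g').
Proof.
  intros (f1 & f2 & f3) (g1 & g2 & g3).
  pose proof (is_derive_plus _ _ _ _ _
    (is_derive_plus _ _ _ _ _ (is_derive_opp _ _ _ (Derive.is_derive_mult _ _ _ _ _ f1 g1))
       (Derive.is_derive_mult _ _ _ _ _ f2 g2)) (Derive.is_derive_mult _ _ _ _ _ f3 g3)) as K.
  match type of K with is_derive _ _ ?d =>
    replace (lor f' (g y) + lor (f y) g') with d by (unfold lor, plus, opp; simpl; ring) end.
  eapply is_derive_ext; [|exact K]; intro z; unfold lor, plus, opp; simpl; ring.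
Qed.

Lemma lor_pvV_self_const D F c u v : open2 D -> smoothV_on D F ->
  (forall x y, D x y -> lor (F x y) (F x y) = c) -> D u v -> lor (F u v) (pvV F u v) = 0.
Proof.
  intros HD HF Hc Hd.
  pose proof (is_deriveV_pvV F u v (smoothV_ex_pvV D F u v HF Hd)) as HFv.
  pose proof (is_derive_lor _ _ _ _ _ HFv HFv) as Hder.
  assert (Hconst : is_derive (fun y => lor (F u y) (F u y)) v 0).
  { destruct (HD u v Hd) as (eps & Heps & Hball).
    apply (is_derive_ext_loc (fun _ => c)); [|auto_derive; auto].
    exists (mkposreal eps Heps); intros y Hy; symmetry; apply Hc, Hball; [|exact Hy].
    rewrite Rminus_eq_0, Rabs_R0; exact Heps. }
  pose proof (is_derive_unique _ _ _ Hder) as E1.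
  pose proof (is_derive_unique _ _ _ Hconst) as E2.
  rewrite lor_sym in E1; lra.
Qed.

Lemma puV_frame_comb (H t n b : R -> R -> V3) k tau a c u v :
  (forall x y, H x y = vcomb a (t x y) c (b x y)) -> ex_puV t u v -> ex_puV b u v ->
  puV t u v = vscal k (n u v) -> puV b u v = vscal tau (n u v) ->
  puV H u v = vscal (a * k + c * tau) (n u v).
Proof.
  intros EH Et Eb Htu Hbu.
  rewrite (puV_comb H t b a c) by assumption.
  now rewrite Htu, Hbu, vcomb_vscal_same.
Qed.

Lemma puV_offset (sigma t n b : R -> R -> V3) A B k tau u v :
  ex_puV sigma u v -> ex_puV n u v ->
  puV sigma u v = t u v -> puV n u v = vsub (vscal k (t u v)) (vscal tau (b u v)) ->
  A * k + B * tau = 1 ->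
  puV (fun x y => vsub (sigma x y) (vscal A (n x y))) u v
  = vscal tau (vcomb B (t u v) A (b u v)).
Proof.
  intros Es En Hsu Hnu Hrel.
  rewrite (puV_comb _ sigma n 1 (- A)) by (intros; apply vsub_vcomb || assumption).
  rewrite Hsu, Hnu.
  replace (vcomb 1 (t u v) (- A) (vsub (vscal k (t u v)) (vscal tau (b u v))))
    with (vcomb (1 - A * k) (t u v) (A * tau) (b u v)) by V3_ring.
  replace (1 - A * k) with (B * tau) by lra.
  V3_ring.
Qed.

Lemma lor_pvV_offset (sigma n b : R -> R -> V3) lambda A u v :
  ex_pvV sigma u v -> ex_pvV n u v ->
  pvV sigma u v = vscal lambda (b u v) -> lor (n u v) (b u v) = 0 ->
  lor (n u v) (pvV n u v) = 0 ->
  lor (n u v) (pvV (fun x y => vsub (sigma x y) (vscal A (n x y))) u v) = 0.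
Proof.
  intros Es En Hsv Hnb Hnnv.
  rewrite (pvV_comb _ sigma n 1 (- A)) by (intros; apply vsub_vcomb || assumption).
  rewrite lor_vcombr, Hsv, lor_scalr, Hnb, Hnnv; ring.
Qed.

Theorem mainTheorem2
  (D : R -> R -> Prop) (HD : open2 D)
  (sigma t n b : R -> R -> V3) (lambda kappa tau : R -> R -> R) (A B : R)
  (ustar : R -> R -> R)
  (Hsm_sigma : smoothV_on D sigma) (Hsm_t : smoothV_on D t)
  (Hsm_n : smoothV_on D n) (Hsm_b : smoothV_on D b)
  (Htt : forall u v, D u v -> lor (t u v) (t u v) = -1)
  (Hnn : forall u v, D u v -> lor (n u v) (n u v) = 1)
  (Hbb : forall u v, D u v -> lor (b u v) (b u v) = 1)
  (Htn : forall u v, D u v -> lor (t u v) (n u v) = 0)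
  (Htb : forall u v, D u v -> lor (t u v) (b u v) = 0)
  (Hnb : forall u v, D u v -> lor (n u v) (b u v) = 0)
  (Hsu : forall u v, D u v -> puV sigma u v = t u v)
  (Hsv : forall u v, D u v -> pvV sigma u v = vscal (lambda u v) (b u v))
  (Hlam : forall u v, D u v -> lambda u v <> 0)
  (Htu : forall u v, D u v -> puV t u v = vscal (kappa u v) (n u v))
  (Hnu : forall u v, D u v ->
     puV n u v = vsub (vscal (kappa u v) (t u v)) (vscal (tau u v) (b u v)))
  (Hbu : forall u v, D u v -> puV b u v = vscal (tau u v) (n u v))
  (HAB : B ^ 2 > A ^ 2)
  (Hrel : forall u v, D u v -> A * kappa u v + B * tau u v = 1)
  (Htau : forall u v, D u v -> tau u v <> 0)
  (Hus : forall u v, D u v ->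
     is_derive (fun x => ustar x v) u (sqrt (B ^ 2 - A ^ 2) * tau u v)) :
  let sstar := fun u v => vsub (sigma u v) (vscal A (n u v)) in
  let tstar := fun u v =>
    vscal (/ sqrt (B ^ 2 - A ^ 2)) (vadd (vscal B (t u v)) (vscal A (b u v))) in
  let bstar := fun u v =>
    vscal (/ sqrt (B ^ 2 - A ^ 2)) (vadd (vscal (- A) (t u v)) (vscal B (b u v))) in
  let kstar := fun u v => (B * kappa u v + A * tau u v) / ((B ^ 2 - A ^ 2) * tau u v) in
  let tstar' := fun u v => (B * tau u v - A * kappa u v) / ((B ^ 2 - A ^ 2) * tau u v) in
  (* (1) *)
  (forall u v, D u v ->
     puV sstar u v = vscal (tau u v) (vadd (vscal B (t u v)) (vscal A (b u v))) /\
     vscal (/ pu ustar u v) (puV sstar u v) = tstar u v /\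
     lor (tstar u v) (tstar u v) = -1 /\
     lor (n u v) (puV sstar u v) = 0 /\
     lor (n u v) (pvV sstar u v) = 0) /\
  (* (2) *)
  (exists c : R, forall u v, D u v -> lnorm (vsub (sigma u v) (sstar u v)) = c) /\
  (forall u v, D u v -> lor (vsub (sstar u v) (sigma u v)) (b u v) = 0) /\
  (forall u v, D u v -> lor (vsub (sstar u v) (sigma u v)) (bstar u v) = 0) /\
  (exists c : R, forall u v, D u v -> lor (b u v) (bstar u v) = c) /\
  (* (3) *)
  (forall u v, D u v ->
     vscal (/ pu ustar u v) (puV tstar u v) = vscal (kstar u v) (n u v) /\
     vscal (/ pu ustar u v) (puV bstar u v) = vscal (tstar' u v) (n u v)).
Proof.
  intros sstar tstar bstar kstar tstar'.
  set (s := sqrt (B ^ 2 - A ^ 2)) in *.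
  assert (Hs2 : s * s = B ^ 2 - A ^ 2) by (apply sqrt_sqrt; lra).
  assert (Hs : s <> 0) by (intro E; rewrite E in Hs2; lra).
  assert (Hpus : forall u v, D u v -> pu ustar u v = s * tau u v)
    by (intros; apply is_derive_unique, Hus; assumption).
  assert (Hsstar_u : forall u v, D u v ->
    puV sstar u v = vscal (tau u v) (vcomb B (t u v) A (b u v)))
    by (intros; apply (puV_offset sigma t n b A B (kappa u v)); eauto using smoothV_ex_puV).
  assert (Htstar : forall u v, tstar u v = vcomb (/ s * B) (t u v) (/ s * A) (b u v))
    by (intros; apply vscal_vcomb).
  assert (Hbstar : forall u v, bstar u v = vcomb (/ s * - A) (t u v) (/ s * B) (b u v))
    by (intros; apply vscal_vcomb).
  assert (Hframe_u : forall H a c u v, (forall x y, H x y = vcomb a (t x y) c (b x y)) ->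
    D u v -> puV H u v = vscal (a * kappa u v + c * tau u v) (n u v))
    by (intros; apply (puV_frame_comb H t n b); eauto using smoothV_ex_puV).
  split; [|split; [|split; [|split; [|split]]]].
  - intros u v Hd; repeat split; auto.
    + rewrite Hpus, Hsstar_u, vscal_vscal, Htstar by assumption.
      rewrite vscal_vcomb; f_equal; field; auto.
    + rewrite Htstar; apply lor_boost_comb; auto.
    + rewrite Hsstar_u, lor_scalr, (lor_normal_comb (t u v) (n u v) (b u v)) by auto; ring.
    + apply (lor_pvV_offset sigma n b (lambda u v)); eauto using smoothV_ex_pvV.
      apply (lor_pvV_self_const D n 1); auto.
  - exists (sqrt (Rabs (A * A))); intros u v Hd.
    unfold lnorm, sstar; rewrite vsub_vsubr, lor_scall, lor_scalr, Hnn by auto.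
    do 2 f_equal; ring.
  - intros u v Hd; unfold sstar; rewrite vsub_vsubl, !lor_scall, Hnb by auto; ring.
  - intros u v Hd; unfold sstar; rewrite vsub_vsubl, Hbstar, !lor_scall.
    rewrite (lor_normal_comb (t u v) (n u v) (b u v)) by auto; ring.
  - exists (/ s * B); intros u v Hd.
    rewrite Hbstar, (lor_binormal_comb (t u v) (b u v)) by auto; reflexivity.
  - intros u v Hd; rewrite Hpus by assumption; split.
    + rewrite (Hframe_u tstar _ _ u v Htstar), vscal_vscal by assumption.
      unfold kstar; f_equal; rewrite <- Hs2; field; auto.
    + rewrite (Hframe_u bstar _ _ u v Hbstar), vscal_vscal by assumption.
      unfold tstar'; f_equal; rewrite <- Hs2; field; auto.
Qed.
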